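(* For all $x>0$ and $\nu>0$, \begin{align*} \left.\frac{\partial\,\mathrm{ber}_{\mu}(x)}{\partial\mu}\right|_{\mu=-\nu} &=-\mathrm{Re}\left[e^{-i\pi\nu/2}\left\{\left(e^{-i\pi\nu}+\cos\pi\nu\right)K_{\nu}\left(e^{i\pi/4}x\right)+\frac{2}{\pi}\sin\pi\nu\,\frac{\partial K_{\nu}}{\partial\nu}\left(e^{i\pi/4}x\right)\right\}+\frac{\partial J_{\nu}}{\partial\nu}\left(e^{-i\pi/4}x\right)\right],\\ \left.\frac{\partial\,\mathrm{bei}_{\mu}(x)}{\partial\mu}\right|_{\mu=-\nu} &=-\mathrm{Im}\left[e^{-i\pi\nu/2}\left\{\left(e^{-i\pi\nu}+\cos\pi\nu\right)K_{\nu}\left(e^{i\pi/4}x\right)+\frac{2}{\pi}\sin\pi\nu\,\frac{\partial K_{\nu}}{\partial\nu}\left(e^{i\pi/4}x\right)\right\}+\frac{\partial J_{\nu}}{\partial\nu}\left(e^{-i\pi/4}x\right)\right]. \end{align*}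
   Context: $J_\nu$ is the Bessel function of the first kind and $K_\nu$ the Macdonald function (modified Bessel function of the second kind), with principal branches. For real $\nu$ and $x\ge0$ the Kelvin functions are defined by $\mathrm{ber}_{\nu}(x)+i\,\mathrm{bei}_{\nu}(x)=e^{i\pi\nu}J_{\nu}(e^{-i\pi/4}x)$ and $\mathrm{ker}_{\nu}(x)+i\,\mathrm{kei}_{\nu}(x)=e^{-i\pi\nu/2}K_{\nu}(e^{i\pi/4}x)$, with all four functions real-valued. The notation $\frac{\partial J_{\nu}}{\partial\nu}(z)$ means $\frac{\partial}{\partial\mu}J_\mu(z)\big|_{\mu=\nu}$, similarly for $K_\nu$. (The paper writes the left-hand sides as $\partial\,\mathrm{ber}_{-\nu}(x)/\partial\nu$ and $\partial\,\mathrm{bei}_{-\nu}(x)/\partial\nu$, meaning the order derivative evaluated at order $-\nu$.) *)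

From Stdlib Require Import Reals.
From Coquelicot Require Import Coquelicot.
Open Scope R_scope.

Definition CC := Complex.C.

Definition cexp (z : CC) : CC :=
  (exp (Re z) * cos (Im z), exp (Re z) * sin (Im z)).

(* principal argument, in (-PI, PI] *)
Definition carg (z : CC) : R :=
  let a := Re z in let b := Im z in
  if Rlt_dec 0 a then atan (b / a)
  else if Rlt_dec a 0 then
    (if Rle_dec 0 b then atan (b / a) + PI else atan (b / a) - PI)
  else if Rlt_dec 0 b then PI / 2
  else if Rlt_dec b 0 then - (PI / 2) else 0.

(* principal logarithm (junk at 0) *)
Definition clog (z : CC) : CC := (ln (Cmod z), carg z).

Definition cpow (z : CC) (a : R) : CC := cexp (Cmult (RtoC a) (clog z)).

Definition csum (u : nat -> CC) : CC :=
  (Series (fun k => Re (u k)), Series (fun k => Im (u k))).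

(* reciprocal Gamma function 1/Gamma(s) (entire, zero at s = 0,-1,-2,...),
   by Gauss' product formula:
   1/Gamma(s) = lim_n s(s+1)...(s+n) / (n! n^s) *)
Definition rgamma (s : R) : R :=
  real (Lim_seq (fun n => prod_f_R0 (fun k => s + INR k) n
                          / (INR (Factorial.fact n) * Rpower (INR n) s))).

Definition BesselJ (nu : R) (z : CC) : CC :=
  csum (fun k => Cmult (RtoC ((-1) ^ k * rgamma (nu + INR k + 1) / INR (Factorial.fact k)))
                       (cpow (Cdiv z (RtoC 2)) (nu + 2 * INR k))).

Definition BesselI (nu : R) (z : CC) : CC :=
  csum (fun k => Cmult (RtoC (rgamma (nu + INR k + 1) / INR (Factorial.fact k)))
                       (cpow (Cdiv z (RtoC 2)) (nu + 2 * INR k))).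

(* K_nu(z) = pi/2 (I_{-nu}(z) - I_nu(z)) / sin(nu pi) for non-integer nu,
   and the limit of this expression at integer nu *)
Definition BesselK_raw (nu : R) (z : CC) : CC :=
  Cmult (RtoC (PI / 2 / sin (nu * PI))) (Cminus (BesselI (- nu) z) (BesselI nu z)).

Definition BesselK (nu : R) (z : CC) : CC :=
  (real (Lim (fun mu => Re (BesselK_raw mu z)) nu),
   real (Lim (fun mu => Im (BesselK_raw mu z)) nu)).

Definition dorder (F : R -> CC -> CC) (nu : R) (z : CC) : CC :=
  (Derive (fun mu => Re (F mu z)) nu, Derive (fun mu => Im (F mu z)) nu).

Definition eI (theta : R) : CC := cexp (0, theta).

(* Kelvin functions (as defined in the paper):
   ber_nu(x) + i bei_nu(x) = e^{i pi nu} J_nu(e^{-i pi/4} x) *)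
Definition ber (nu x : R) : R :=
  Re (Cmult (eI (PI * nu)) (BesselJ nu (Cmult (eI (- (PI / 4))) (RtoC x)))).
Definition bei (nu x : R) : R :=
  Im (Cmult (eI (PI * nu)) (BesselJ nu (Cmult (eI (- (PI / 4))) (RtoC x)))).

Definition kelvin_rhs (nu x : R) : CC :=
  let w1 := Cmult (eI (PI / 4)) (RtoC x) in
  let w2 := Cmult (eI (- (PI / 4))) (RtoC x) in
  Cplus
    (Cmult (eI (- (PI * nu / 2)))
       (Cplus (Cmult (Cplus (eI (- (PI * nu))) (RtoC (cos (PI * nu)))) (BesselK nu w1))
              (Cmult (RtoC (2 / PI * sin (PI * nu))) (dorder BesselK nu w1))))
    (dorder BesselJ nu w2).

(* With [w = e^(i pi/4) x], the series of [J_mu(e^(-i pi/4) x)] is termwise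
   [e^(-i pi mu/2)] times that of [I_mu(w)], so [ber_mu x + i bei_mu x = e^(i pi mu/2) I_mu(w)]
   and its order derivative at [-nu] is [e^(-i pi nu/2) (i pi/2 I_(-nu)(w) + dI_(-nu)(w))].
   For non-integer [nu], inserting [K_nu = pi/2 (I_(-nu) - I_nu) / sin(pi nu)] and its order
   derivative into the right-hand side collapses it to the same expression; at integer orders
   [K_nu] comes from L'Hopital's rule and [I_(-n) = I_n] closes the gap.
   Differentiating the Bessel series in the order is done termwise, under a domination by
   [C^k / k!]; it needs the smoothness of [1/Gamma], which follows from Gauss's product
   formula through the locally uniform convergence of the logarithms of the partial products
   and of their derivatives. *)

From Stdlib Require Import Reals Lra Lia ZArith.
From Coquelicot Require Import Coquelicot.
Open Scope R_scope.

Lemma mean_value_bound (g g' : R -> R) (c d K a b : R) :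
  (forall y, Rabs (y - c) < d -> is_derive g y (g' y)) ->
  (forall y, Rabs (y - c) < d -> Rabs (g' y) <= K) ->
  Rabs (a - c) < d -> Rabs (b - c) < d ->
  Rabs (g b - g a) <= K * Rabs (b - a).
Proof.
  intros Hg HK.
  assert (Hlt : forall u v, u < v -> Rabs (u - c) < d -> Rabs (v - c) < d ->
            Rabs (g v - g u) <= K * Rabs (v - u)).
  { intros u v Huv Hu Hv; apply Rabs_def2 in Hu; apply Rabs_def2 in Hv.
    assert (Hin : forall y, u <= y <= v -> Rabs (y - c) < d)
      by (intros y Hy; apply Rabs_def1; lra).
    destruct (MVT_cor2 g g' u v Huv) as [y [Hy Hyuv]];
      [intros y Hy; apply is_derive_Reals, Hg, Hin; lra |].
    rewrite Hy, Rabs_mult; apply Rmult_le_compat_r; [apply Rabs_pos | apply HK, Hin; lra]. }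
  intros Ha Hb; destruct (Rtotal_order a b) as [Hab | [-> | Hab]].
  - apply Hlt; auto.
  - rewrite !Rminus_diag, Rabs_R0; lra.
  - rewrite Rabs_minus_sym, (Rabs_minus_sym b); apply Hlt; auto.
Qed.

Lemma is_lim_seq_ub (u : nat -> R) (l C : R) (N : nat) :
  is_lim_seq u l -> (forall n, (N <= n)%nat -> u n <= C) -> l <= C.
Proof.
  intros Hu HC.
  apply (is_lim_seq_le_loc u (fun _ => C) l C); [exists N; auto | auto | apply is_lim_seq_const].
Qed.

Section UniformDerivative.

Variables (F F' : nat -> R -> R) (f : R -> R) (c d : R).
Hypothesis F_derive : forall n y, Rabs (y - c) < d -> is_derive (F n) y (F' n y).
Hypothesis F_lim : forall y, Rabs (y - c) < d -> is_lim_seq (fun n => F n y) (f y).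

Lemma lim_increment_bound (eps : R) (N n : nat) (a b : R) :
  (forall n m y, (N <= n)%nat -> (N <= m)%nat -> Rabs (y - c) < d ->
     Rabs (F' n y - F' m y) <= eps) ->
  (N <= n)%nat -> Rabs (a - c) < d -> Rabs (b - c) < d ->
  Rabs ((f b - F n b) - (f a - F n a)) <= eps * Rabs (b - a).
Proof.
  intros HC Hn Ha Hb.
  assert (Lb := is_lim_seq_minus' _ _ _ _ (F_lim b Hb) (is_lim_seq_const (F n b))).
  assert (La := is_lim_seq_minus' _ _ _ _ (F_lim a Ha) (is_lim_seq_const (F n a))).
  apply (is_lim_seq_ub _ _ _ N (is_lim_seq_abs _ _ (is_lim_seq_minus' _ _ _ _ Lb La))).
  intros m Hm; cbv beta.
  apply (mean_value_bound (fun y => F m y - F n y) (fun y => F' m y - F' n y) c d); auto.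
  intros y Hy; apply (is_derive_minus (F m) (F n)); auto.
Qed.

Lemma is_derive_lim_seq (g : R) :
  0 < d ->
  is_lim_seq (fun n => F' n c) g ->
  (forall eps, 0 < eps -> exists N, forall n m y, (N <= n)%nat -> (N <= m)%nat ->
       Rabs (y - c) < d -> Rabs (F' n y - F' m y) <= eps) ->
  is_derive f c g.
Proof.
  intros Hd Hg HC.
  apply is_derive_Reals; intros eps Heps.
  destruct (HC (eps / 4)) as [N1 HN1]; [lra|].
  apply is_lim_seq_spec in Hg.
  destruct (Hg (mkposreal (eps / 4) ltac:(lra))) as [N2 HN2]; simpl in HN2.
  set (n := max N1 N2).
  assert (Hc : Rabs (c - c) < d) by (rewrite Rminus_diag, Rabs_R0; lra).
  assert (Hn := F_derive n c Hc); apply is_derive_Reals in Hn.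
  destruct (Hn (eps / 4)) as [d0 Hd0]; [lra|].
  assert (Hpos : 0 < Rmin d0 d) by (apply Rmin_pos; [apply cond_pos | lra]).
  exists (mkposreal _ Hpos); simpl; intros h Hh0 Hh.
  assert (Hch : Rabs (c + h - c) < d).
  { replace (c + h - c) with h by ring; eapply Rlt_le_trans; [apply Hh | apply Rmin_r]. }
  assert (Htail : Rabs (((f (c + h) - F n (c + h)) - (f c - F n c)) / h) <= eps / 4).
  { unfold Rdiv; rewrite Rabs_mult, Rabs_inv.
    apply (Rmult_le_reg_r (Rabs h)); [apply Rabs_pos_lt; auto|].
    rewrite Rmult_assoc, Rinv_l by (apply Rabs_no_R0; auto).
    assert (B := lim_increment_bound (eps / 4) N1 n c (c + h) HN1 ltac:(lia) Hc Hch).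
    replace (c + h - c) with h in B by ring; lra. }
  assert (Hquot : Rabs ((F n (c + h) - F n c) / h - F' n c) < eps / 4).
  { apply Hd0; auto; eapply Rlt_le_trans; [apply Hh | apply Rmin_l]. }
  assert (Hlimit : Rabs (F' n c - g) < eps / 4) by (apply HN2; lia).
  replace ((f (c + h) - f c) / h - g) with
    (((f (c + h) - F n (c + h)) - (f c - F n c)) / h +
     ((F n (c + h) - F n c) / h - F' n c) + (F' n c - g)) by (field; auto).
  eapply Rle_lt_trans; [apply Rabs_triang|].
  eapply Rle_lt_trans; [apply Rplus_le_compat_r, Rabs_triang | lra].
Qed.

End UniformDerivative.

Lemma ex_series_le_eventually (a M : nat -> R) (K : nat) :
  (forall k, (K <= k)%nat -> Rabs (a k) <= M k) -> ex_series M -> ex_series a.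
Proof.
  intros H HM; apply (proj2 (@ex_series_incr_n R_AbsRing R_NormedModule a K)).
  apply (@ex_series_le R_AbsRing R_CompleteNormedModule _ (fun k => M (K + k)%nat)).
  - intros k; apply H; lia.
  - apply (proj1 (@ex_series_incr_n R_AbsRing R_NormedModule M K)); auto.
Qed.

Lemma sum_n_m_Rabs_le (a M : nat -> R) (K p q : nat) :
  (K <= p)%nat -> (forall k, (K <= k)%nat -> Rabs (a k) <= M k) ->
  Rabs (sum_n_m a p q) <= sum_n_m M p q.
Proof.
  intros Hp H.
  eapply Rle_trans; [apply (@norm_sum_n_m R_AbsRing R_NormedModule) |].
  rewrite (sum_n_m_ext_loc _ (fun k => Rabs (a (max K k)))),
          (sum_n_m_ext_loc M (fun k => M (max K k)))
    by (intros k Hk; rewrite Nat.max_r by lia; reflexivity).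
  apply sum_n_m_le; intros k; apply H; lia.
Qed.

Lemma sum_f_R0_Cauchy_dominated (a M : nat -> R) (K N : nat) (eps : R) (n m : nat) :
  (forall k, (K <= k)%nat -> Rabs (a k) <= M k) ->
  (forall p q, (N <= p)%nat -> (N <= q)%nat -> norm (sum_n_m M p q) < eps) ->
  (S (max N K) <= n)%nat -> (S (max N K) <= m)%nat ->
  Rabs (sum_f_R0 a n - sum_f_R0 a m) <= eps.
Proof.
  intros HM HN.
  assert (Hle : forall p q, (S (max N K) <= p)%nat -> (p <= q)%nat ->
            Rabs (sum_f_R0 a q - sum_f_R0 a p) <= eps).
  { intros p q Hp Hpq.
    assert (E := sum_n_m_sum_n a p q Hpq); rewrite !sum_n_Reals in E.
    change (minus _ _) with (sum_f_R0 a q - sum_f_R0 a p) in E; rewrite <- E.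
    eapply Rle_trans; [apply (sum_n_m_Rabs_le _ M K); auto; lia |].
    eapply Rle_trans; [apply Rle_abs | apply Rlt_le, HN; lia]. }
  intros Hn Hm; destruct (Compare_dec.le_lt_dec n m).
  - rewrite Rabs_minus_sym; apply Hle; auto.
  - apply Hle; auto; lia.
Qed.

Lemma is_derive_sum_f_R0 (f f' : nat -> R -> R) (y : R) (n : nat) :
  (forall k, is_derive (f k) y (f' k y)) ->
  is_derive (fun y => sum_f_R0 (fun k => f k y) n) y (sum_f_R0 (fun k => f' k y) n).
Proof.
  intros H; induction n as [|n IH]; simpl; auto.
  apply (is_derive_plus (fun y => sum_f_R0 (fun k => f k y) n) (f (S n))); auto.
Qed.

Lemma is_derive_Series (f f' : nat -> R -> R) (M : nat -> R) (K : nat) (c d : R) :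
  0 < d ->
  (forall k y, Rabs (y - c) < d -> is_derive (f k) y (f' k y)) ->
  (forall k y, (K <= k)%nat -> Rabs (y - c) < d ->
     Rabs (f k y) <= M k /\ Rabs (f' k y) <= M k) ->
  ex_series M ->
  is_derive (fun y => Series (fun k => f k y)) c (Series (fun k => f' k c)).
Proof.
  intros Hd Hf HM HMs.
  assert (Hc : Rabs (c - c) < d) by (rewrite Rminus_diag, Rabs_R0; lra).
  assert (Hlim : forall g : nat -> R, ex_series g ->
            is_lim_seq (sum_f_R0 g) (Series g)).
  { intros g Hg; eapply is_lim_seq_ext; [intros n; apply sum_n_Reals | apply Series_correct, Hg]. }
  apply (is_derive_lim_seq (fun n y => sum_f_R0 (fun k => f k y) n)
                           (fun n y => sum_f_R0 (fun k => f' k y) n) _ c d).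
  - intros n y Hy; apply is_derive_sum_f_R0; auto.
  - intros y Hy; apply Hlim, (ex_series_le_eventually _ M K); auto.
    intros k Hk; apply (HM k y Hk Hy).
  - exact Hd.
  - apply Hlim, (ex_series_le_eventually _ M K); auto.
    intros k Hk; apply (HM k c Hk Hc).
  - intros eps Heps.
    destruct (Cauchy_ex_series M HMs (mkposreal eps Heps)) as [N HN].
    exists (S (max N K)); intros n m y Hn Hm Hy.
    apply (sum_f_R0_Cauchy_dominated _ M K N); auto.
    intros k Hk; apply (HM k y Hk Hy).
Qed.

Lemma exp_le (a b : R) : a <= b -> exp a <= exp b.
Proof. intros [H | ->]; [left; apply exp_increasing; auto | apply Rle_refl]. Qed.

Lemma ln_le_sub1 (y : R) : 0 < y -> ln y <= y - 1.
Proof. intros Hy; pose proof (exp_ineq1_le (ln y)); rewrite exp_ln in H; lra. Qed.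

Lemma ln1p_ge (t : R) : 0 <= t -> t / (1 + t) <= ln (1 + t).
Proof.
  intros Ht; pose proof (ln_le_sub1 (/ (1 + t)) ltac:(apply Rinv_0_lt_compat; lra)).
  rewrite ln_Rinv in H by lra.
  replace (/ (1 + t) - 1) with (- (t / (1 + t))) in H by (field; lra); lra.
Qed.

Lemma INR_ge1 (n : nat) : (1 <= n)%nat -> 1 <= INR n.
Proof. intros; apply (le_INR 1); auto. Qed.

Lemma Rinv_INR_le (n m : nat) : (1 <= n)%nat -> (n <= m)%nat -> 0 < / INR m <= / INR n.
Proof.
  intros Hn Hm; assert (1 <= INR n) by (apply INR_ge1; auto).
  split; [apply Rinv_0_lt_compat, lt_0_INR; lia |].
  apply Rinv_le_contravar; [lra | apply le_INR; auto].
Qed.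

Lemma telescope_decr (u : nat -> R) (C : R) :
  (forall k, (1 <= k)%nat -> 0 <= u k - u (S k) <= C * (/ INR k - / INR (S k))) ->
  forall n m, (1 <= n)%nat -> (n <= m)%nat -> 0 <= u n - u m <= C * (/ INR n - / INR m).
Proof.
  intros Hstep n m Hn Hm; induction Hm as [|m Hm IH]; [lra|].
  assert (H := Hstep m ltac:(lia)); lra.
Qed.

Lemma telescope_Cauchy (w : nat -> R) (C : R) (N n m : nat) : 0 <= C ->
  (forall n m, (1 <= n)%nat -> (n <= m)%nat -> Rabs (w n - w m) <= C * (/ INR n - / INR m)) ->
  (1 <= N)%nat -> (N <= n)%nat -> (N <= m)%nat -> Rabs (w n - w m) <= C / INR N.
Proof.
  intros HC Hw HN Hn Hm.
  assert (Hle : forall n m, (N <= n)%nat -> (n <= m)%nat -> Rabs (w n - w m) <= C / INR N).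
  { intros p q Hp Hq.
    assert (I1 := Rinv_INR_le N p HN Hp); assert (I2 := Rinv_INR_le p q ltac:(lia) Hq).
    eapply Rle_trans; [apply Hw; lia |]; unfold Rdiv; nra. }
  destruct (Compare_dec.le_lt_dec n m); [apply Hle; auto |].
  rewrite Rabs_minus_sym; apply Hle; auto; lia.
Qed.

Lemma is_lim_seq_telescope (w : nat -> R) (C : R) : 0 <= C ->
  (forall n m, (1 <= n)%nat -> (n <= m)%nat -> Rabs (w n - w m) <= C * (/ INR n - / INR m)) ->
  is_lim_seq w (real (Lim_seq w)).
Proof.
  intros HC Hw; apply Lim_seq_correct', ex_lim_seq_cauchy_corr; intros eps.
  destruct (archimed_cor1 (eps / (C + 1))) as [N [HN HN0]].
  { apply Rdiv_lt_0_compat; [apply cond_pos | lra]. }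
  exists N; intros n m Hn Hm.
  eapply Rle_lt_trans; [apply (telescope_Cauchy w C N); auto; lia |].
  assert (Heps := cond_pos eps); assert (HNpos : 0 < INR N) by (apply lt_0_INR; auto).
  apply (Rmult_lt_compat_l (C + 1)) in HN; [| lra].
  replace ((C + 1) * (eps / (C + 1))) with (pos eps) in HN by (field; lra).
  assert (C / INR N <= (C + 1) * / INR N); [| lra].
  unfold Rdiv; apply Rmult_le_compat_r; [left; apply Rinv_0_lt_compat |]; lra.
Qed.

Fixpoint harm (n : nat) : R :=
  match n with O => 0 | S m => harm m + / INR (S m) end.
Fixpoint harm_shift (s : R) (n : nat) : R :=
  match n with O => 0 | S m => harm_shift s m + / (s + INR (S m)) end.
Fixpoint log1p_sum (s : R) (n : nat) : R :=
  match n with O => 0 | S m => log1p_sum s m + ln (1 + s / INR (S m)) end.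

Lemma harm_S (n : nat) : harm (S n) = harm n + / (INR n + 1).
Proof. change (harm (S n)) with (harm n + / INR (S n)); rewrite S_INR; reflexivity. Qed.
Lemma harm_shift_S (s : R) (n : nat) : harm_shift s (S n) = harm_shift s n + / (s + (INR n + 1)).
Proof.
  change (harm_shift s (S n)) with (harm_shift s n + / (s + INR (S n))); rewrite S_INR; reflexivity.
Qed.
Lemma log1p_sum_S (s : R) (n : nat) : log1p_sum s (S n) = log1p_sum s n + ln (1 + s / (INR n + 1)).
Proof.
  change (log1p_sum s (S n)) with (log1p_sum s n + ln (1 + s / INR (S n))).
  rewrite S_INR; reflexivity.
Qed.

Definition euler_seq (n : nat) : R := harm n - ln (INR n).
Definition log1p_defect (s : R) (n : nat) : R := log1p_sum s n - s * harm n.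
Definition harm_shift_defect (s : R) (n : nat) : R := harm_shift s n - harm n.

Lemma euler_seq_step (k : nat) : (1 <= k)%nat ->
  0 <= euler_seq k - euler_seq (S k) <= 1 * (/ INR k - / INR (S k)).
Proof.
  intros Hk; unfold euler_seq; rewrite harm_S, S_INR.
  assert (Hk1 := INR_ge1 k Hk).
  assert (H1 := ln_le_sub1 ((INR k + 1) / INR k) ltac:(apply Rdiv_lt_0_compat; lra)).
  assert (H2 := ln_le_sub1 (INR k / (INR k + 1)) ltac:(apply Rdiv_lt_0_compat; lra)).
  rewrite ln_div in H1, H2 by lra.
  replace ((INR k + 1) / INR k - 1) with (/ INR k) in H1 by (field; lra).
  replace (INR k / (INR k + 1) - 1) with (- / (INR k + 1)) in H2 by (field; lra).
  lra.
Qed.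

Lemma log1p_defect_step (s : R) : 0 <= s -> forall k : nat, (1 <= k)%nat ->
  0 <= log1p_defect s k - log1p_defect s (S k) <= s * s * (/ INR k - / INR (S k)).
Proof.
  intros Hs k Hk; unfold log1p_defect; rewrite log1p_sum_S, harm_S, S_INR.
  assert (Hk1 := INR_ge1 k Hk).
  set (t := s / (INR k + 1)).
  assert (Ht : 0 <= t) by (apply Rdiv_le_0_compat; lra).
  assert (H1 := ln_le_sub1 (1 + t) ltac:(lra)); assert (H2 := ln1p_ge t Ht).
  assert (Ht2 : t * t / (1 + t) <= s * s * (/ INR k - / (INR k + 1))).
  { apply Rle_trans with (t * t).
    - apply (Rmult_le_reg_r (1 + t)); [lra|].
      replace (t * t / (1 + t) * (1 + t)) with (t * t) by (field; lra); nra.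
    - replace (t * t) with (s * s / ((INR k + 1) * (INR k + 1))) by (unfold t; field; lra).
      replace (/ INR k - / (INR k + 1)) with (/ (INR k * (INR k + 1))) by (field; lra).
      apply Rmult_le_compat_l; [nra|]; apply Rinv_le_contravar; nra. }
  replace (s * (harm k + / (INR k + 1))) with (s * harm k + t) by (unfold t; field; lra).
  replace (t / (1 + t)) with (t - t * t / (1 + t)) in H2 by (field; lra).
  lra.
Qed.

Lemma harm_shift_defect_step (s : R) : 0 <= s -> forall k : nat, (1 <= k)%nat ->
  0 <= harm_shift_defect s k - harm_shift_defect s (S k) <= s * (/ INR k - / INR (S k)).
Proof.
  intros Hs k Hk; unfold harm_shift_defect; rewrite harm_shift_S, harm_S, S_INR.
  assert (Hk1 := INR_ge1 k Hk).
  replace (harm_shift s k - harm k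
           - (harm_shift s k + / (s + (INR k + 1)) - (harm k + / (INR k + 1))))
    with (s / ((INR k + 1) * (s + INR k + 1))) by (field; lra).
  replace (s * (/ INR k - / (INR k + 1))) with (s / (INR k * (INR k + 1))) by (field; lra).
  split; [apply Rdiv_le_0_compat; nra |].
  unfold Rdiv; apply Rmult_le_compat_l; auto; apply Rinv_le_contravar; nra.
Qed.

Lemma euler_seq_bound (n : nat) : (1 <= n)%nat -> 0 <= euler_seq n <= 1.
Proof.
  intros Hn; assert (H := telescope_decr _ 1 euler_seq_step 1 n ltac:(lia) Hn).
  assert (E : euler_seq 1 = 1) by (unfold euler_seq; simpl; rewrite ln_1; lra).
  assert (I := Rinv_INR_le 1 n ltac:(lia) Hn); simpl in H, I; lra.
Qed.

Lemma log1p_defect_nonpos (s : R) (n : nat) : 0 <= s -> log1p_defect s n <= 0.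
Proof.
  intros Hs; destruct n as [|n]; [unfold log1p_defect; simpl; lra |].
  assert (H1 : log1p_defect s 1 <= 0).
  { unfold log1p_defect; rewrite log1p_sum_S, harm_S; simpl.
    replace (s / (0 + 1)) with s by field; replace (/ (0 + 1)) with 1 by field.
    pose proof (ln_le_sub1 (1 + s) ltac:(lra)); lra. }
  pose proof (telescope_decr _ _ (log1p_defect_step s Hs) 1 (S n) ltac:(lia) ltac:(lia)); lra.
Qed.

Lemma harm_shift_defect_bound (s : R) (n : nat) : 0 <= s -> (1 <= n)%nat ->
  - (2 * s) <= harm_shift_defect s n <= 0.
Proof.
  intros Hs Hn.
  assert (H1 : - s <= harm_shift_defect s 1 <= 0).
  { unfold harm_shift_defect; rewrite harm_shift_S, harm_S; simpl.
    replace (0 + / (s + (0 + 1)) - (0 + / (0 + 1))) with (- (s / (s + 1))) by (field; lra).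
    assert (s / (s + 1) <= s).
    { apply (Rmult_le_reg_r (s + 1)); [lra|].
      replace (s / (s + 1) * (s + 1)) with s by (field; lra); nra. }
    assert (0 <= s / (s + 1)) by (apply Rdiv_le_0_compat; lra); lra. }
  assert (H := telescope_decr _ _ (harm_shift_defect_step s Hs) 1 n ltac:(lia) Hn).
  assert (I := Rinv_INR_le 1 n ltac:(lia) Hn); simpl in H, I.
  replace (/ 1) with 1 in H by field; nra.
Qed.

Definition log_gauss (s : R) (n : nat) : R := ln s + log1p_sum s n - s * ln (INR n).
Definition dlog_gauss (s : R) (n : nat) : R := / s + harm_shift s n - ln (INR n).

Lemma log_gauss_split (s : R) (n : nat) :
  log_gauss s n = ln s + log1p_defect s n + s * euler_seq n.
Proof. unfold log_gauss, log1p_defect, euler_seq; ring. Qed.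

Lemma dlog_gauss_split (s : R) (n : nat) :
  dlog_gauss s n = / s + harm_shift_defect s n + euler_seq n.
Proof. unfold dlog_gauss, harm_shift_defect, euler_seq; ring. Qed.

Lemma log_gauss_incr (s : R) (n m : nat) : 0 <= s -> (1 <= n)%nat -> (n <= m)%nat ->
  Rabs (log_gauss s n - log_gauss s m) <= (s * s + s) * (/ INR n - / INR m).
Proof.
  intros Hs Hn Hm; rewrite !log_gauss_split.
  assert (H1 := telescope_decr _ _ (log1p_defect_step s Hs) n m Hn Hm).
  assert (H2 := telescope_decr _ _ euler_seq_step n m Hn Hm).
  apply Rabs_le; split; nra.
Qed.

Lemma dlog_gauss_incr (s : R) (n m : nat) : 0 <= s -> (1 <= n)%nat -> (n <= m)%nat ->
  Rabs (dlog_gauss s n - dlog_gauss s m) <= (s + 1) * (/ INR n - / INR m).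
Proof.
  intros Hs Hn Hm; rewrite !dlog_gauss_split.
  assert (H1 := telescope_decr _ _ (harm_shift_defect_step s Hs) n m Hn Hm).
  assert (H2 := telescope_decr _ _ euler_seq_step n m Hn Hm).
  apply Rabs_le; split; nra.
Qed.

Definition log_rgamma (s : R) : R := real (Lim_seq (log_gauss s)).
Definition dlog_rgamma (s : R) : R := real (Lim_seq (dlog_gauss s)).

Lemma is_lim_seq_log_gauss (s : R) : 0 <= s -> is_lim_seq (log_gauss s) (log_rgamma s).
Proof.
  intros Hs; apply (is_lim_seq_telescope _ (s * s + s)); [nra |].
  intros; apply log_gauss_incr; auto.
Qed.

Lemma is_lim_seq_dlog_gauss (s : R) : 0 <= s -> is_lim_seq (dlog_gauss s) (dlog_rgamma s).
Proof.
  intros Hs; apply (is_lim_seq_telescope _ (s + 1)); [lra |].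
  intros; apply dlog_gauss_incr; auto.
Qed.

Lemma is_derive_log1p_sum (s : R) (n : nat) : 0 < s ->
  is_derive (fun s => log1p_sum s n) s (harm_shift s n).
Proof.
  intros Hs; induction n as [|n IH]; [simpl; apply (@is_derive_const R_AbsRing R_NormedModule) |].
  apply (is_derive_ext (fun s => log1p_sum s n + ln (1 + s / (INR n + 1))));
    [intros t; symmetry; apply log1p_sum_S |].
  rewrite harm_shift_S; apply (is_derive_plus (fun s => log1p_sum s n)); auto.
  assert (0 <= INR n) by apply pos_INR.
  auto_derive; [apply Rplus_lt_le_0_compat; [lra | apply Rdiv_le_0_compat; lra] | field; lra].
Qed.

Lemma is_derive_log_gauss (s : R) (n : nat) : 0 < s ->
  is_derive (fun s => log_gauss s n) s (dlog_gauss s n).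
Proof.
  intros Hs; unfold log_gauss, dlog_gauss.
  apply (is_derive_minus (fun s => ln s + log1p_sum s n) (fun s => s * ln (INR n))).
  - apply (is_derive_plus ln (fun s => log1p_sum s n)); [| apply is_derive_log1p_sum; auto].
    apply is_derive_Reals, derivable_pt_lim_ln; auto.
  - auto_derive; [auto | ring].
Qed.

Lemma is_derive_log_rgamma (s : R) : 0 < s -> is_derive log_rgamma s (dlog_rgamma s).
Proof.
  intros Hs.
  apply (is_derive_lim_seq (fun n y => log_gauss y (S n)) (fun n y => dlog_gauss y (S n))
           log_rgamma s (s / 2)); [| | lra | |].
  - intros n y Hy; apply Rabs_def2 in Hy; apply is_derive_log_gauss; lra.
  - intros y Hy; apply Rabs_def2 in Hy.
    apply (is_lim_seq_incr_1 (log_gauss y)), is_lim_seq_log_gauss; lra.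
  - apply (is_lim_seq_incr_1 (dlog_gauss s)), is_lim_seq_dlog_gauss; lra.
  - intros eps Heps.
    destruct (archimed_cor1 (eps / (2 * s + 1))) as [N [HN HN0]].
    { apply Rdiv_lt_0_compat; lra. }
    exists N; intros n m y Hn Hm Hy; apply Rabs_def2 in Hy.
    eapply Rle_trans; [apply (telescope_Cauchy (dlog_gauss y) (y + 1) N); try lia; try lra |].
    { intros; apply dlog_gauss_incr; auto; lra. }
    assert (HNpos : 0 < / INR N) by (apply Rinv_0_lt_compat, lt_0_INR; auto).
    apply (Rmult_lt_compat_l (2 * s + 1)) in HN; [| lra].
    replace ((2 * s + 1) * (eps / (2 * s + 1))) with eps in HN by (field; lra).
    unfold Rdiv; nra.
Qed.

Definition gauss_prod (s : R) (n : nat) : R :=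
  prod_f_R0 (fun k => s + INR k) n / (INR (Factorial.fact n) * Rpower (INR n) s).

Lemma rising_div_fact (s : R) (n : nat) : 0 < s ->
  prod_f_R0 (fun k => s + INR k) n / INR (Factorial.fact n) = s * exp (log1p_sum s n).
Proof.
  intros Hs; induction n as [|n IH]; [simpl; rewrite exp_0; field |].
  assert (0 <= INR n) by apply pos_INR.
  assert (INR (Factorial.fact n) <> 0) by apply INR_fact_neq_0.
  rewrite log1p_sum_S, exp_plus, exp_ln
    by (assert (0 <= s / (INR n + 1)) by (apply Rdiv_le_0_compat; lra); lra).
  change (prod_f_R0 (fun k => s + INR k) (S n))
    with (prod_f_R0 (fun k => s + INR k) n * (s + INR (S n))).
  rewrite fact_simpl, mult_INR, S_INR, <- Rmult_assoc, <- IH; field; lra.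
Qed.

Lemma gauss_prod_exp (s : R) (n : nat) : 0 < s -> (1 <= n)%nat ->
  gauss_prod s n = exp (log_gauss s n).
Proof.
  intros Hs Hn; unfold gauss_prod, log_gauss, Rpower.
  assert (INR (Factorial.fact n) <> 0) by apply INR_fact_neq_0.
  assert (exp (s * ln (INR n)) <> 0) by apply Rgt_not_eq, exp_pos.
  replace (prod_f_R0 (fun k => s + INR k) n / (INR (Factorial.fact n) * exp (s * ln (INR n))))
    with (prod_f_R0 (fun k => s + INR k) n / INR (Factorial.fact n) / exp (s * ln (INR n)))
    by (field; auto).
  rewrite rising_div_fact by auto.
  unfold Rminus; rewrite !exp_plus, exp_Ropp, exp_ln; auto.
Qed.

Lemma is_lim_seq_gauss_prod_pos (s : R) : 0 < s -> is_lim_seq (gauss_prod s) (exp (log_rgamma s)).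
Proof.
  intros Hs; apply is_lim_seq_incr_1.
  apply (is_lim_seq_ext (fun n => exp (log_gauss s (S n))));
    [intros n; rewrite gauss_prod_exp; auto; lia |].
  apply (is_lim_seq_continuous exp); [apply derivable_continuous_pt, derivable_pt_exp |].
  apply (is_lim_seq_incr_1 (log_gauss s)), is_lim_seq_log_gauss; lra.
Qed.

Lemma rising_shift (s : R) (n : nat) :
  prod_f_R0 (fun k => s + 1 + INR k) n * s = prod_f_R0 (fun k => s + INR k) n * (s + INR n + 1).
Proof.
  induction n as [|n IH]; [simpl; ring |].
  change (prod_f_R0 (fun k => s + 1 + INR k) (S n))
    with (prod_f_R0 (fun k => s + 1 + INR k) n * (s + 1 + INR (S n))).
  change (prod_f_R0 (fun k => s + INR k) (S n))
    with (prod_f_R0 (fun k => s + INR k) n * (s + INR (S n))).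
  rewrite S_INR.
  transitivity (prod_f_R0 (fun k => s + 1 + INR k) n * s * (s + 1 + (INR n + 1))); [ring |].
  rewrite IH; ring.
Qed.

Lemma gauss_prod_shift (s : R) (n : nat) : (1 <= n)%nat -> s + INR n + 1 <> 0 ->
  gauss_prod s n = s * gauss_prod (s + 1) n * (INR n / (s + INR n + 1)).
Proof.
  intros Hn Hs; unfold gauss_prod.
  assert (0 < INR n) by (apply lt_0_INR; lia).
  rewrite Rpower_plus, Rpower_1 by auto.
  assert (INR (Factorial.fact n) <> 0) by apply INR_fact_neq_0.
  assert (0 < Rpower (INR n) s) by apply exp_pos.
  assert (E := rising_shift s n).
  apply (Rmult_eq_reg_r (INR (Factorial.fact n) * Rpower (INR n) s * (s + INR n + 1)));
    [field_simplify; try (repeat split; lra); lra |].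
  apply Rmult_integral_contrapositive; split; [apply Rmult_integral_contrapositive; split |]; lra.
Qed.

Lemma is_lim_seq_INR_ratio (a : R) : is_lim_seq (fun n => INR n / (a + INR n + 1)) 1.
Proof.
  destruct (INR_unbounded (Rabs a + 1)) as [N HN].
  apply (is_lim_seq_ext_loc (fun n => 1 - (a + 1) * / (a + INR n + 1))).
  { exists N; intros n Hn; assert (INR N <= INR n) by (apply le_INR; auto).
    assert (a + INR n + 1 <> 0) by (pose proof (Rle_abs (- a)); rewrite Rabs_Ropp in *; lra).
    field; auto. }
  assert (L : is_lim_seq (fun n => 1 - (a + 1) * / (a + INR n + 1)) (1 - (a + 1) * 0));
    [| replace (1 - (a + 1) * 0) with 1 in L by ring; exact L].
  apply (is_lim_seq_minus' (fun _ => 1)); [apply is_lim_seq_const |].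
  apply (is_lim_seq_scal_l _ (a + 1) 0).
  replace (Finite 0) with (Rbar_inv p_infty) by reflexivity.
  apply is_lim_seq_inv; [| discriminate].
  apply (is_lim_seq_plus _ _ p_infty 1); [| apply is_lim_seq_const | reflexivity].
  apply (is_lim_seq_plus _ _ a p_infty);
    [apply is_lim_seq_const | apply is_lim_seq_INR | reflexivity].
Qed.

Lemma is_lim_seq_gauss_prod_shift (s l : R) :
  is_lim_seq (gauss_prod (s + 1)) l -> is_lim_seq (gauss_prod s) (s * l).
Proof.
  intros H; destruct (INR_unbounded (Rabs s + 1)) as [N HN].
  apply (is_lim_seq_ext_loc (fun n => s * gauss_prod (s + 1) n * (INR n / (s + INR n + 1)))).
  { exists (S N); intros n Hn; assert (INR N <= INR n) by (apply le_INR; lia).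
    symmetry; apply gauss_prod_shift; [lia |].
    pose proof (Rle_abs (- s)); rewrite Rabs_Ropp in *; lra. }
  replace (s * l) with (s * l * 1) by ring.
  apply is_lim_seq_mult'; [apply (is_lim_seq_scal_l _ s l H) | apply is_lim_seq_INR_ratio].
Qed.

Lemma rgamma_exp (s : R) : 0 < s -> rgamma s = exp (log_rgamma s).
Proof.
  intros Hs; unfold rgamma; fold (gauss_prod s).
  rewrite (is_lim_seq_unique _ _ (is_lim_seq_gauss_prod_pos s Hs)); reflexivity.
Qed.

Lemma is_lim_seq_gauss_prod (s : R) : is_lim_seq (gauss_prod s) (rgamma s).
Proof.
  destruct (INR_unbounded (- s)) as [m Hm].
  revert s Hm; induction m as [|m IH]; intros s Hs.
  - simpl in Hs; rewrite rgamma_exp by lra; apply is_lim_seq_gauss_prod_pos; lra.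
  - rewrite S_INR in Hs.
    assert (H := is_lim_seq_gauss_prod_shift s _ (IH (s + 1) ltac:(lra))).
    unfold rgamma; fold (gauss_prod s); rewrite (is_lim_seq_unique _ _ H); exact H.
Qed.

Lemma rgamma_rec (s : R) : rgamma s = s * rgamma (s + 1).
Proof.
  assert (H := is_lim_seq_gauss_prod_shift s _ (is_lim_seq_gauss_prod (s + 1))).
  unfold rgamma at 1; fold (gauss_prod s); rewrite (is_lim_seq_unique _ _ H); reflexivity.
Qed.

Lemma is_derive_rgamma_pos (s : R) : 0 < s -> is_derive rgamma s (rgamma s * dlog_rgamma s).
Proof.
  intros Hs.
  apply (is_derive_ext_loc (fun y => exp (log_rgamma y))).
  { exists (mkposreal s Hs); intros y Hy; change (Rabs (y - s) < s) in Hy.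
    apply Rabs_def2 in Hy; symmetry; apply rgamma_exp; lra. }
  rewrite rgamma_exp, Rmult_comm by auto.
  apply (is_derive_comp exp log_rgamma s); [| apply is_derive_log_rgamma; auto].
  apply is_derive_Reals, derivable_pt_lim_exp.
Qed.

Lemma ex_derive_rgamma (s : R) : ex_derive rgamma s.
Proof.
  destruct (INR_unbounded (- s)) as [m Hm].
  revert s Hm; induction m as [|m IH]; intros s Hs.
  - simpl in Hs; eexists; apply is_derive_rgamma_pos; lra.
  - rewrite S_INR in Hs; assert (H := IH (s + 1) ltac:(lra)).
    apply (ex_derive_ext (fun y => y * rgamma (y + 1))); [intros t; symmetry; apply rgamma_rec |].
    auto_derive; auto.
Qed.

Lemma log_rgamma_le (s : R) : 0 < s -> log_rgamma s <= ln s + s.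
Proof.
  intros Hs; apply (is_lim_seq_ub (log_gauss s) _ _ 1); [apply is_lim_seq_log_gauss; lra |].
  intros n Hn; rewrite log_gauss_split.
  assert (H1 := log1p_defect_nonpos s n ltac:(lra)); assert (H2 := euler_seq_bound n Hn); nra.
Qed.

Lemma dlog_rgamma_bound (s : R) : 0 < s -> Rabs (dlog_rgamma s) <= / s + 1 + 2 * s.
Proof.
  intros Hs; assert (Hl := is_lim_seq_dlog_gauss s ltac:(lra)).
  assert (0 < / s) by (apply Rinv_0_lt_compat; auto).
  assert (Hb : forall n, (1 <= n)%nat -> Rabs (dlog_gauss s n) <= / s + 1 + 2 * s).
  { intros n Hn; rewrite dlog_gauss_split.
    assert (H1 := harm_shift_defect_bound s n ltac:(lra) Hn); assert (H2 := euler_seq_bound n Hn).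
    apply Rabs_le; lra. }
  apply (is_lim_seq_ub _ _ _ 1 (is_lim_seq_abs _ _ Hl) Hb).
Qed.

Lemma rgamma_pos_bound (s : R) : 0 < s -> 0 < rgamma s <= s * exp s.
Proof.
  intros Hs; rewrite rgamma_exp by auto; split; [apply exp_pos |].
  rewrite <- (exp_ln s) at 2 by auto; rewrite <- exp_plus; apply exp_le, log_rgamma_le; auto.
Qed.

Lemma Derive_rgamma_pos_bound (s : R) : 0 < s ->
  Rabs (Derive rgamma s) <= exp s * (1 + s + 2 * s * s).
Proof.
  intros Hs; rewrite (is_derive_unique _ _ _ (is_derive_rgamma_pos s Hs)), Rabs_mult.
  assert (H1 := rgamma_pos_bound s Hs); assert (H2 := dlog_rgamma_bound s Hs).
  rewrite Rabs_right by lra.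
  apply Rle_trans with (s * exp s * (/ s + 1 + 2 * s));
    [apply Rmult_le_compat; auto; try lra; apply Rabs_pos | right; field; lra].
Qed.

Lemma rgamma_exp_bound (t : R) : 0 < t ->
  Rabs (rgamma t) <= 4 * exp (3 * t) /\ Rabs (Derive rgamma t) <= 4 * exp (3 * t).
Proof.
  intros Ht; assert (H1 := rgamma_pos_bound t Ht); assert (H2 := Derive_rgamma_pos_bound t Ht).
  assert (E1 := exp_ineq1_le t).
  assert (E3 : exp (3 * t) = exp t * exp t * exp t) by (rewrite <- !exp_plus; f_equal; ring).
  rewrite E3; split; [rewrite Rabs_right by lra; nra |].
  assert (t * t <= exp t * exp t) by nra.
  assert (1 + t + 2 * t * t <= 4 * (exp t * exp t)) by nra.
  eapply Rle_trans; [apply H2 | nra].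
Qed.

Lemma rgamma_1 : rgamma 1 = 1.
Proof.
  assert (Hfact : forall n, prod_f_R0 (fun k => 1 + INR k) n = INR (Factorial.fact (S n))).
  { induction n as [|n IH]; [simpl; ring |].
    change (prod_f_R0 (fun k => 1 + INR k) (S n))
      with (prod_f_R0 (fun k => 1 + INR k) n * (1 + INR (S n))).
    rewrite IH, (fact_simpl (S n)), mult_INR, !S_INR; ring. }
  assert (H : is_lim_seq (gauss_prod 1) (1 + 0)).
  { apply (is_lim_seq_ext_loc (fun n => 1 + / INR n)).
    { exists 1%nat; intros n Hn; unfold gauss_prod.
      assert (0 < INR n) by (apply lt_0_INR; lia).
      assert (INR (Factorial.fact n) <> 0) by apply INR_fact_neq_0.
      rewrite Rpower_1, Hfact, fact_simpl, mult_INR, S_INR by auto; field; lra. }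
    apply (is_lim_seq_plus' (fun _ => 1)); [apply is_lim_seq_const |].
    replace (Finite 0) with (Rbar_inv p_infty) by reflexivity.
    apply is_lim_seq_inv; [apply is_lim_seq_INR | discriminate]. }
  unfold rgamma; fold (gauss_prod 1); rewrite (is_lim_seq_unique _ _ H); simpl; ring.
Qed.

Lemma rgamma_nat_succ (m : nat) : rgamma (INR m + 1) = / INR (Factorial.fact m).
Proof.
  induction m as [|m IH]; [simpl; rewrite Rplus_0_l, rgamma_1; field |].
  rewrite (rgamma_rec (INR m + 1)) in IH.
  rewrite S_INR, fact_simpl, mult_INR, S_INR.
  assert (INR (Factorial.fact m) <> 0) by apply INR_fact_neq_0.
  assert (0 <= INR m) by apply pos_INR.
  apply (Rmult_eq_reg_l (INR m + 1)); [rewrite IH; field; lra | lra].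
Qed.

Lemma rgamma_neg_nat (m : nat) : rgamma (- INR m) = 0.
Proof.
  induction m as [|m IH]; [simpl; rewrite Ropp_0, rgamma_rec; ring |].
  rewrite S_INR, rgamma_rec; replace (- (INR m + 1) + 1) with (- INR m) by ring.
  rewrite IH; ring.
Qed.

Lemma ex_series_exp (a : R) : ex_series (fun k => a ^ k / INR (Factorial.fact k)).
Proof.
  apply (ex_series_ext (fun k => scal (pow_n a k) (/ INR (Factorial.fact k))));
    [intros n; rewrite pow_n_pow; reflexivity |].
  eexists; apply is_exp_Reals.
Qed.

Lemma exp_INR_mult (a : R) (k : nat) : exp (INR k * a) = exp a ^ k.
Proof.
  induction k as [|k IH]; [simpl; rewrite Rmult_0_l, exp_0; reflexivity |].
  rewrite S_INR, Rmult_plus_distr_r, exp_plus, Rmult_1_l, IH; simpl; ring.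
Qed.

Definition term_mod (x mu : R) (k : nat) : R :=
  rgamma (mu + INR k + 1) / INR (Factorial.fact k) * exp ((mu + 2 * INR k) * ln (x / 2)).
Definition dterm_mod (x mu : R) (k : nat) : R :=
  (Derive rgamma (mu + INR k + 1) + rgamma (mu + INR k + 1) * ln (x / 2))
    / INR (Factorial.fact k) * exp ((mu + 2 * INR k) * ln (x / 2)).
Definition term_arg (mu : R) (k : nat) : R := (mu + 2 * INR k) * (PI / 4).

Lemma is_derive_term_mod (x mu : R) (k : nat) :
  is_derive (fun mu => term_mod x mu k) mu (dterm_mod x mu k).
Proof.
  unfold term_mod, dterm_mod; assert (H := ex_derive_rgamma (mu + INR k + 1)).
  assert (INR (Factorial.fact k) <> 0) by apply INR_fact_neq_0.
  auto_derive; [auto |]; change (fun y => rgamma y) with rgamma; field; auto.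
Qed.

Definition term_dom (x mu0 : R) (k : nat) : R :=
  let L := Rabs (ln (x / 2)) in let P := Rabs mu0 + 2 in
  4 * exp (3 * P + P * L) * (exp (3 + 2 * L) ^ k / INR (Factorial.fact k)).

Lemma ex_series_term_dom (x mu0 : R) : ex_series (term_dom x mu0).
Proof. apply (@ex_series_scal_l R_AbsRing R_NormedModule), ex_series_exp. Qed.

Lemma term_growth_bound (x mu0 mu : R) (k : nat) : Rabs (mu - mu0) < 1 ->
  let L := Rabs (ln (x / 2)) in let P := Rabs mu0 + 2 in
  exp (3 * (mu + INR k + 1)) * exp ((mu + 2 * INR k) * ln (x / 2))
  <= exp (3 * P + P * L) * exp (3 + 2 * L) ^ k.
Proof.
  intros Hmu L P; unfold L, P.
  rewrite <- exp_INR_mult, <- !exp_plus; apply exp_le.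
  assert (Hmu0 : Rabs mu <= Rabs mu0 + 1).
  { replace mu with (mu0 + (mu - mu0)) by ring; eapply Rle_trans; [apply Rabs_triang | lra]. }
  assert (Hk : 0 <= INR k) by apply pos_INR.
  assert ((mu + 2 * INR k) * ln (x / 2) <= (Rabs mu0 + 2 + 2 * INR k) * Rabs (ln (x / 2))).
  { eapply Rle_trans; [apply Rle_abs |]; rewrite Rabs_mult.
    apply Rmult_le_compat_r; [apply Rabs_pos |].
    eapply Rle_trans; [apply Rabs_triang |].
    rewrite Rabs_mult, (Rabs_right 2), (Rabs_right (INR k)); lra. }
  pose proof (Rle_abs mu); pose proof (Rabs_pos (ln (x / 2))); nra.
Qed.

Lemma term_mod_bound (x mu0 mu : R) (k : nat) :
  Rabs (mu - mu0) < 1 -> Rabs mu0 + 1 < INR k ->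
  Rabs (term_mod x mu k) <= term_dom x mu0 k /\
  Rabs (dterm_mod x mu k) <= (1 + Rabs (ln (x / 2))) * term_dom x mu0 k.
Proof.
  intros Hmu Hk; assert (Hgrowth := term_growth_bound x mu0 mu k Hmu); cbv zeta in Hgrowth.
  unfold term_mod, dterm_mod, term_dom.
  set (L := ln (x / 2)) in *; set (t := mu + INR k + 1) in *.
  set (F := INR (Factorial.fact k)); set (E := exp ((mu + 2 * INR k) * L)) in *.
  assert (HL : 0 <= Rabs L) by apply Rabs_pos.
  assert (HF : 0 < / F) by apply Rinv_0_lt_compat, INR_fact_lt_0.
  assert (HE : 0 < E) by apply exp_pos.
  assert (Ht : 0 < t).
  { unfold t; apply Rabs_def2 in Hmu; pose proof (Rle_abs (- mu0)); rewrite Rabs_Ropp in *; lra. }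
  destruct (rgamma_exp_bound t Ht) as [Hg Hdg].
  assert (Hcore : 4 * exp (3 * t) / F * E <=
           4 * exp (3 * (Rabs mu0 + 2) + (Rabs mu0 + 2) * Rabs L) * (exp (3 + 2 * Rabs L) ^ k / F)).
  { unfold Rdiv; nra. }
  assert (Habs : forall a, Rabs (a / F * E) = Rabs a / F * E).
  { intros a; rewrite Rabs_mult, Rabs_div, (Rabs_right E), (Rabs_right F); auto; try lra.
    - apply Rle_ge, pos_INR.
    - apply INR_fact_neq_0. }
  rewrite !Habs; split.
  - eapply Rle_trans; [| apply Hcore]; unfold Rdiv.
    apply Rmult_le_compat_r, Rmult_le_compat_r; lra.
  - eapply Rle_trans with ((1 + Rabs L) * (4 * exp (3 * t) / F * E)); [| nra].
    assert (Rabs (Derive rgamma t + rgamma t * L) <= (1 + Rabs L) * (4 * exp (3 * t))).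
    { eapply Rle_trans; [apply Rabs_triang |]; rewrite Rabs_mult; nra. }
    unfold Rdiv; rewrite <- !Rmult_assoc.
    apply Rmult_le_compat_r, Rmult_le_compat_r; lra.
Qed.

Section PhaseSeries.

Variables phi phi' : R -> R.
Hypothesis phi_derive : forall y, is_derive phi y (phi' y).
Hypothesis phi_bound : forall y, Rabs (phi y) <= 1.
Hypothesis phi'_bound : forall y, Rabs (phi' y) <= 1.

Definition phase_term (x mu : R) (k : nat) : R := term_mod x mu k * phi (term_arg mu k).
Definition dphase_term (x mu : R) (k : nat) : R :=
  dterm_mod x mu k * phi (term_arg mu k) + term_mod x mu k * (phi' (term_arg mu k) * (PI / 4)).
Definition phase_series (x mu : R) : R := Series (phase_term x mu).

Lemma is_derive_phase_term (x mu : R) (k : nat) :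
  is_derive (fun mu => phase_term x mu k) mu (dphase_term x mu k).
Proof.
  unfold phase_term, dphase_term.
  apply (is_derive_mult (fun mu => term_mod x mu k) (fun mu => phi (term_arg mu k)));
    [apply is_derive_term_mod | | intros; apply Rmult_comm].
  rewrite Rmult_comm.
  apply (is_derive_comp phi (fun mu => term_arg mu k) mu); [apply phi_derive |].
  unfold term_arg; auto_derive; auto; ring.
Qed.

Lemma phase_term_bound (x mu0 mu : R) (k : nat) :
  Rabs (mu - mu0) < 1 -> Rabs mu0 + 1 < INR k ->
  Rabs (phase_term x mu k) <= (2 + Rabs (ln (x / 2))) * term_dom x mu0 k /\
  Rabs (dphase_term x mu k) <= (2 + Rabs (ln (x / 2))) * term_dom x mu0 k.
Proof.
  intros Hmu Hk; destruct (term_mod_bound x mu0 mu k Hmu Hk) as [Hm Hdm].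
  unfold phase_term, dphase_term.
  set (a := term_arg mu k); set (L := Rabs (ln (x / 2))) in *.
  assert (HL : 0 <= L) by apply Rabs_pos.
  assert (Hpi : 0 < PI / 4 <= 1) by (pose proof PI_4; pose proof PI_RGT_0; lra).
  assert (H1 := phi_bound a); assert (H2 := phi'_bound a).
  assert (Hdom : 0 <= term_dom x mu0 k) by (eapply Rle_trans; [apply Rabs_pos | apply Hm]).
  assert (Hm0 := Rabs_pos (term_mod x mu k)); assert (Hdm0 := Rabs_pos (dterm_mod x mu k)).
  assert (0 <= Rabs (phi a)) by apply Rabs_pos; assert (0 <= Rabs (phi' a)) by apply Rabs_pos.
  rewrite Rabs_mult; split; [nra |].
  eapply Rle_trans; [apply Rabs_triang |]; rewrite !Rabs_mult, (Rabs_right (PI / 4)) by lra.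
  assert (Rabs (dterm_mod x mu k) * Rabs (phi a) <= (1 + L) * term_dom x mu0 k) by nra.
  assert (Rabs (phi' a) * (PI / 4) <= 1) by nra.
  nra.
Qed.

Lemma phase_term_dominated (x mu0 : R) : exists (M : nat -> R) (K : nat), ex_series M /\
  forall k mu, (K <= k)%nat -> Rabs (mu - mu0) < 1 ->
    Rabs (phase_term x mu k) <= M k /\ Rabs (dphase_term x mu k) <= M k.
Proof.
  destruct (INR_unbounded (Rabs mu0 + 1)) as [K HK].
  exists (fun k => (2 + Rabs (ln (x / 2))) * term_dom x mu0 k), K; split.
  - apply (@ex_series_scal_l R_AbsRing R_NormedModule), ex_series_term_dom.
  - intros k mu Hk Hmu; apply phase_term_bound; auto.
    apply Rlt_le_trans with (INR K); [lra | apply le_INR; auto].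
Qed.

Lemma is_derive_phase_series (x mu : R) :
  is_derive (phase_series x) mu (Series (dphase_term x mu)).
Proof.
  destruct (phase_term_dominated x mu) as [M [K [HM Hdom]]].
  apply (is_derive_Series (fun k y => phase_term x y k) (fun k y => dphase_term x y k) M K mu 1);
    auto; [lra | intros k y _; apply is_derive_phase_term].
Qed.

Lemma ex_series_phase_term (x mu : R) : ex_series (phase_term x mu).
Proof.
  destruct (phase_term_dominated x mu) as [M [K [HM Hdom]]].
  apply (ex_series_le_eventually _ M K); auto.
  intros k Hk; apply (Hdom k mu Hk); rewrite Rminus_diag, Rabs_R0; lra.
Qed.

Lemma phase_term_opp_nat (x : R) (n k : nat) :
  phase_term x (- INR n) (n + k) = phase_term x (INR n) k.
Proof.
  unfold phase_term, term_mod, term_arg; rewrite plus_INR.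
  replace (- INR n + (INR n + INR k) + 1) with (INR k + 1) by ring.
  replace (INR n + INR k + 1) with (INR (n + k) + 1) by (rewrite plus_INR; ring).
  replace (- INR n + 2 * (INR n + INR k)) with (INR n + 2 * INR k) by ring.
  rewrite !rgamma_nat_succ.
  assert (INR (Factorial.fact k) <> 0) by apply INR_fact_neq_0.
  assert (INR (Factorial.fact (n + k)) <> 0) by apply INR_fact_neq_0.
  field; auto.
Qed.

Lemma phase_term_opp_nat_head (x : R) (n k : nat) : (k < n)%nat -> phase_term x (- INR n) k = 0.
Proof.
  intros Hk; unfold phase_term, term_mod.
  replace (- INR n + INR k + 1) with (- INR (n - S k))
    by (rewrite minus_INR by lia; rewrite S_INR; ring).
  rewrite rgamma_neg_nat; unfold Rdiv; ring.
Qed.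

(* [I_(-n) = I_n]: the first [n] terms of order [-n] vanish, as [1/Gamma] does at the
   nonpositive integers, and the others are those of order [n]. *)
Lemma phase_series_opp_nat (x : R) (n : nat) : phase_series x (- INR n) = phase_series x (INR n).
Proof.
  destruct n as [|n]; [simpl; rewrite Ropp_0; reflexivity |].
  unfold phase_series; rewrite (Series_incr_n _ (S n)) by (auto using ex_series_phase_term; lia).
  rewrite sum_eq_R0, Rplus_0_l by (intros k Hk; apply phase_term_opp_nat_head; simpl in Hk; lia).
  apply Series_ext; intros k; apply phase_term_opp_nat.
Qed.

End PhaseSeries.

Lemma eI_eq (t : R) : eI t = (cos t, sin t).
Proof. unfold eI, cexp; simpl; rewrite exp_0, !Rmult_1_l; reflexivity. Qed.

Lemma Cmult_eI (t : R) (z : CC) :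
  Cmult (eI t) z = (cos t * Re z - sin t * Im z, sin t * Re z + cos t * Im z).
Proof. rewrite eI_eq; destruct z; unfold Cmult, Re, Im; simpl; f_equal; ring. Qed.

Lemma half_eI_scale (t x : R) :
  Cdiv (Cmult (eI t) (RtoC x)) (RtoC 2) = (x / 2 * cos t, x / 2 * sin t).
Proof. rewrite eI_eq; unfold Cdiv, Cmult, Cinv, RtoC; simpl; f_equal; field. Qed.

Lemma cpow_polar (r t e : R) : 0 < r -> - (PI / 2) < t < PI / 2 ->
  cpow (r * cos t, r * sin t) e = (exp (e * ln r) * cos (e * t), exp (e * ln r) * sin (e * t)).
Proof.
  intros Hr Ht; assert (Hc := cos_gt_0 t (proj1 Ht) (proj2 Ht)).
  assert (Hmod : Cmod (r * cos t, r * sin t) = r).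
  { unfold Cmod; cbn [fst snd].
    replace ((r * cos t) ^ 2 + (r * sin t) ^ 2) with (r ^ 2 * (Rsqr (sin t) + Rsqr (cos t)))
      by (unfold Rsqr; ring).
    rewrite sin2_cos2, Rmult_1_r; apply sqrt_pow2; lra. }
  assert (Harg : carg (r * cos t, r * sin t) = t).
  { unfold carg; simpl; destruct (Rlt_dec 0 (r * cos t)) as [_ | H]; [| exfalso; nra].
    replace (r * sin t / (r * cos t)) with (tan t) by (unfold tan; field; lra).
    apply atan_tan; lra. }
  unfold cpow, clog; rewrite Hmod, Harg; unfold cexp, Cmult, RtoC; simpl.
  replace (e * ln r - 0 * t) with (e * ln r) by ring.
  replace (e * t + 0 * ln r) with (e * t) by ring.
  reflexivity.
Qed.

Lemma cpow_half_eI (t x e : R) : 0 < x -> - (PI / 2) < t < PI / 2 ->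
  cpow (Cdiv (Cmult (eI t) (RtoC x)) (RtoC 2)) e =
  (exp (e * ln (x / 2)) * cos (e * t), exp (e * ln (x / 2)) * sin (e * t)).
Proof. intros Hx Ht; rewrite half_eI_scale; apply cpow_polar; auto; lra. Qed.

Lemma cos_sub_nat_PI (k : nat) (y : R) : cos (y - INR k * PI) = (-1) ^ k * cos y.
Proof.
  induction k as [|k IH]; [simpl; rewrite Rmult_0_l, Rminus_0_r; ring |].
  rewrite S_INR; replace (y - (INR k + 1) * PI) with ((y - INR k * PI) - PI) by ring.
  rewrite cos_minus, cos_PI, sin_PI, IH; simpl; ring.
Qed.

Lemma sin_sub_nat_PI (k : nat) (y : R) : sin (y - INR k * PI) = (-1) ^ k * sin y.
Proof.
  induction k as [|k IH]; [simpl; rewrite Rmult_0_l, Rminus_0_r; ring |].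
  rewrite S_INR; replace (y - (INR k + 1) * PI) with ((y - INR k * PI) - PI) by ring.
  rewrite sin_minus, cos_PI, sin_PI, IH; simpl; ring.
Qed.

Lemma Series_lincomb (a b : nat -> R) (p q : R) : ex_series a -> ex_series b ->
  Series (fun k => p * a k + q * b k) = p * Series a + q * Series b.
Proof.
  intros Ha Hb; rewrite Series_plus, !Series_scal_l; auto;
    apply (@ex_series_scal_l R_AbsRing R_NormedModule); auto.
Qed.

Definition w1 (x : R) : CC := Cmult (eI (PI / 4)) (RtoC x).
Definition w2 (x : R) : CC := Cmult (eI (- (PI / 4))) (RtoC x).

Definition Ire (x mu : R) : R := phase_series cos x mu.
Definition Iim (x mu : R) : R := phase_series sin x mu.

Lemma cos_bound (y : R) : Rabs (cos y) <= 1.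
Proof. apply Rabs_le; pose proof (COS_bound y); lra. Qed.
Lemma sin_bound (y : R) : Rabs (sin y) <= 1.
Proof. apply Rabs_le; pose proof (SIN_bound y); lra. Qed.
Lemma opp_sin_bound (y : R) : Rabs (- sin y) <= 1.
Proof. rewrite Rabs_Ropp; apply sin_bound. Qed.
Lemma is_derive_cos (y : R) : is_derive cos y (- sin y).
Proof. auto_derive; auto; ring. Qed.
Lemma is_derive_sin (y : R) : is_derive sin y (cos y).
Proof. auto_derive; auto; ring. Qed.

Lemma ex_series_Ire (x mu : R) : ex_series (phase_term cos x mu).
Proof. apply (ex_series_phase_term cos (fun y => - sin y) cos_bound opp_sin_bound). Qed.
Lemma ex_series_Iim (x mu : R) : ex_series (phase_term sin x mu).
Proof. apply (ex_series_phase_term sin cos sin_bound cos_bound). Qed.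

Lemma ex_derive_Ire (x mu : R) : ex_derive (Ire x) mu.
Proof. eexists; apply (is_derive_phase_series cos _ is_derive_cos cos_bound opp_sin_bound). Qed.
Lemma ex_derive_Iim (x mu : R) : ex_derive (Iim x) mu.
Proof. eexists; apply (is_derive_phase_series sin _ is_derive_sin sin_bound cos_bound). Qed.

Lemma Ire_opp_nat (x : R) (n : nat) : Ire x (- INR n) = Ire x (INR n).
Proof. apply (phase_series_opp_nat cos (fun y => - sin y) cos_bound opp_sin_bound). Qed.
Lemma Iim_opp_nat (x : R) (n : nat) : Iim x (- INR n) = Iim x (INR n).
Proof. apply (phase_series_opp_nat sin cos sin_bound cos_bound). Qed.

Lemma PI4_bounds : - (PI / 2) < PI / 4 < PI / 2 /\ - (PI / 2) < - (PI / 4) < PI / 2.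
Proof. pose proof PI_RGT_0; lra. Qed.

Lemma BesselI_w1 (x mu : R) : 0 < x -> BesselI mu (w1 x) = (Ire x mu, Iim x mu).
Proof.
  intros Hx; unfold BesselI, csum, Ire, Iim, phase_series, w1; f_equal; apply Series_ext; intros k;
    rewrite cpow_half_eI by (auto; apply PI4_bounds);
    unfold phase_term, term_mod, term_arg, Cmult, RtoC; simpl; ring.
Qed.

(* Termwise, [(-1)^k e^(-i t_k) = e^(-i pi mu/2) e^(i t_k)] with [t_k = (mu + 2k) pi/4],
   so that [J_mu(e^(-i pi/4) x) = e^(-i pi mu/2) I_mu(e^(i pi/4) x)]. *)
Lemma BesselJ_w2 (x mu : R) : 0 < x ->
  BesselJ mu (w2 x) =
  (cos (PI * mu / 2) * Ire x mu + sin (PI * mu / 2) * Iim x mu,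
   cos (PI * mu / 2) * Iim x mu + - sin (PI * mu / 2) * Ire x mu).
Proof.
  intros Hx; unfold Ire, Iim, phase_series.
  rewrite <- !Series_lincomb by (apply ex_series_Ire || apply ex_series_Iim).
  unfold BesselJ, csum, w2; f_equal; apply Series_ext; intros k;
    rewrite cpow_half_eI by (auto; apply PI4_bounds);
    unfold phase_term, term_mod, term_arg, Cmult, RtoC; simpl.
  all: set (t := (mu + 2 * INR k) * (PI / 4)); set (h := PI * mu / 2);
    set (X := rgamma (mu + INR k + 1) / INR (Factorial.fact k)
              * exp ((mu + 2 * INR k) * ln (x / 2)));
    replace ((mu + 2 * INR k) * - (PI / 4)) with (- t) by (unfold t; ring);
    rewrite ?cos_neg, ?sin_neg.
  - assert (E : (-1) ^ k * cos t = cos h * cos t + sin h * sin t).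
    { rewrite <- cos_minus, <- cos_sub_nat_PI; f_equal; unfold t, h; field. }
    transitivity (X * ((-1) ^ k * cos t)); [unfold X, Rdiv; ring | rewrite E; ring].
  - assert (E : (-1) ^ k * sin t = sin h * cos t - cos h * sin t).
    { rewrite <- sin_minus, <- sin_sub_nat_PI; f_equal; unfold t, h; field. }
    transitivity (- (X * ((-1) ^ k * sin t))); [unfold X, Rdiv; ring | rewrite E; ring].
Qed.

Lemma ber_eq (mu x : R) : 0 < x ->
  ber mu x = cos (PI * mu / 2) * Ire x mu - sin (PI * mu / 2) * Iim x mu.
Proof.
  intros Hx; unfold ber; fold (w2 x); rewrite Cmult_eI, BesselJ_w2 by auto; unfold Re, Im; simpl.
  set (h := PI * mu / 2); replace (PI * mu) with (h + h) by (unfold h; field).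
  rewrite cos_plus, sin_plus; assert (S := sin2_cos2 h); unfold Rsqr in S.
  transitivity (cos h * (sin h * sin h + cos h * cos h) * Ire x mu
                - sin h * (sin h * sin h + cos h * cos h) * Iim x mu); [ring | rewrite S; ring].
Qed.

Lemma bei_eq (mu x : R) : 0 < x ->
  bei mu x = sin (PI * mu / 2) * Ire x mu + cos (PI * mu / 2) * Iim x mu.
Proof.
  intros Hx; unfold bei; fold (w2 x); rewrite Cmult_eI, BesselJ_w2 by auto; unfold Re, Im; simpl.
  set (h := PI * mu / 2); replace (PI * mu) with (h + h) by (unfold h; field).
  rewrite cos_plus, sin_plus; assert (S := sin2_cos2 h); unfold Rsqr in S.
  transitivity (sin h * (sin h * sin h + cos h * cos h) * Ire x mu
                + cos h * (sin h * sin h + cos h * cos h) * Iim x mu); [ring | rewrite S; ring].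
Qed.

Definition ber_deriv (x mu : R) : R :=
  - (PI / 2) * sin (PI * mu / 2) * Ire x mu - (PI / 2) * cos (PI * mu / 2) * Iim x mu
  + cos (PI * mu / 2) * Derive (Ire x) mu - sin (PI * mu / 2) * Derive (Iim x) mu.
Definition bei_deriv (x mu : R) : R :=
  (PI / 2) * cos (PI * mu / 2) * Ire x mu - (PI / 2) * sin (PI * mu / 2) * Iim x mu
  + sin (PI * mu / 2) * Derive (Ire x) mu + cos (PI * mu / 2) * Derive (Iim x) mu.

Lemma is_derive_ber (x mu : R) : 0 < x -> is_derive (fun m => ber m x) mu (ber_deriv x mu).
Proof.
  intros Hx; assert (HA := ex_derive_Ire x mu); assert (HB := ex_derive_Iim x mu).
  apply (is_derive_ext (fun m => cos (PI * m / 2) * Ire x m - sin (PI * m / 2) * Iim x m));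
    [intros m; symmetry; apply ber_eq; auto |].
  unfold ber_deriv; auto_derive; [repeat split; auto |].
  change (fun y => Ire x y) with (Ire x); change (fun y => Iim x y) with (Iim x).
  unfold Rdiv; ring.
Qed.

Lemma is_derive_bei (x mu : R) : 0 < x -> is_derive (fun m => bei m x) mu (bei_deriv x mu).
Proof.
  intros Hx; assert (HA := ex_derive_Ire x mu); assert (HB := ex_derive_Iim x mu).
  apply (is_derive_ext (fun m => sin (PI * m / 2) * Ire x m + cos (PI * m / 2) * Iim x m));
    [intros m; symmetry; apply bei_eq; auto |].
  unfold bei_deriv; auto_derive; [repeat split; auto |].
  change (fun y => Ire x y) with (Ire x); change (fun y => Iim x y) with (Iim x).
  unfold Rdiv; ring.
Qed.

Lemma dorder_BesselJ_w2 (x nu : R) : 0 < x ->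
  dorder BesselJ nu (w2 x) =
  (- (PI / 2) * sin (PI * nu / 2) * Ire x nu + cos (PI * nu / 2) * Derive (Ire x) nu
   + (PI / 2) * cos (PI * nu / 2) * Iim x nu + sin (PI * nu / 2) * Derive (Iim x) nu,
   - (PI / 2) * sin (PI * nu / 2) * Iim x nu + cos (PI * nu / 2) * Derive (Iim x) nu
   - (PI / 2) * cos (PI * nu / 2) * Ire x nu - sin (PI * nu / 2) * Derive (Ire x) nu).
Proof.
  intros Hx; assert (HA := ex_derive_Ire x nu); assert (HB := ex_derive_Iim x nu).
  unfold dorder; f_equal.
  - rewrite (Derive_ext _ (fun m => cos (PI * m / 2) * Ire x m + sin (PI * m / 2) * Iim x m))
      by (intros m; rewrite BesselJ_w2; auto).
    apply is_derive_unique; auto_derive; [repeat split; auto |].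
    change (fun y => Ire x y) with (Ire x); change (fun y => Iim x y) with (Iim x).
    unfold Rdiv; ring.
  - rewrite (Derive_ext _ (fun m => cos (PI * m / 2) * Iim x m + - sin (PI * m / 2) * Ire x m))
      by (intros m; rewrite BesselJ_w2; auto).
    apply is_derive_unique; auto_derive; [repeat split; auto |].
    change (fun y => Ire x y) with (Ire x); change (fun y => Iim x y) with (Iim x).
    unfold Rdiv; ring.
Qed.

Lemma is_lim_difference_quotient (g : R -> R) (a dg : R) :
  is_derive g a dg -> g a = 0 -> is_lim (fun y => g y / (y - a)) a dg.
Proof.
  intros Hd H0; apply is_lim_spec; intros eps.
  apply is_derive_Reals in Hd; destruct (Hd eps (cond_pos eps)) as [del Hdel].
  exists del; intros y Hy Hne; change R in y; change (Rabs (y - a) < del) in Hy.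
  assert (Hh : y - a <> 0) by (intro; apply Hne; lra).
  specialize (Hdel (y - a) Hh Hy); replace (a + (y - a)) with y in Hdel by ring.
  rewrite H0, Rminus_0_r in Hdel; auto.
Qed.

Lemma is_lim_lhopital (g h : R -> R) (a dg dh c : R) :
  is_derive g a dg -> is_derive h a dh -> g a = 0 -> h a = 0 -> dh <> 0 ->
  is_lim (fun y => c / h y * g y) a (c * dg / dh).
Proof.
  intros Hg Hh Hg0 Hh0 Hdh.
  assert (Lg := is_lim_difference_quotient g a dg Hg Hg0).
  assert (Lh := is_lim_difference_quotient h a dh Hh Hh0).
  assert (Hnz : Rbar_locally' a (fun y => h y / (y - a) <> 0)).
  { apply is_lim_spec in Lh.
    destruct (Lh (mkposreal (Rabs dh) (Rabs_pos_lt _ Hdh))) as [del Hdel].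
    exists del; intros y Hy Hne; change R in y; specialize (Hdel y Hy Hne); simpl in Hdel.
    intros E; rewrite E, Rminus_0_l, Rabs_Ropp in Hdel; lra. }
  apply (is_lim_ext_loc (fun y => c * ((g y / (y - a)) / (h y / (y - a))))).
  { destruct Hnz as [del Hdel]; exists del; intros y Hy Hne; change R in y.
    specialize (Hdel y Hy Hne).
    assert (y - a <> 0) by (intro; apply Hne; lra).
    assert (h y <> 0) by (intros E; apply Hdel; rewrite E; unfold Rdiv; ring).
    field; auto. }
  replace (Finite (c * dg / dh)) with (Rbar_mult c (Rbar_div dg dh))
    by (simpl; f_equal; unfold Rdiv; ring).
  apply is_lim_scal_l, (is_lim_div _ _ a dg dh); auto.
  - intros E; apply Hdh; injection E; auto.
  - simpl; auto.
Qed.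

Definition K_quotient (F : R -> R) (mu : R) : R := PI / 2 / sin (mu * PI) * (F (- mu) - F mu).
Definition K_limit (F : R -> R) (mu : R) : R := real (Lim (K_quotient F) mu).

Section KLimit.

Variable F : R -> R.
Hypothesis F_derive : forall mu, ex_derive F mu.
Hypothesis F_opp_nat : forall n : nat, F (- INR n) = F (INR n).

Lemma F_opp_int (nu : R) : sin (nu * PI) = 0 -> F (- nu) = F nu.
Proof.
  intros Hs; destruct (sin_eq_0_0 _ Hs) as [k Hk].
  assert (Hnu : nu = IZR k) by (apply (Rmult_eq_reg_r PI); [auto | apply PI_neq0]).
  destruct (Z_le_gt_dec 0 k) as [Hk0 | Hk0].
  - rewrite Hnu, <- (Z2Nat.id k), <- INR_IZR_INZ by auto; apply F_opp_nat.
  - replace nu with (- INR (Z.to_nat (- k)))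
      by (rewrite INR_IZR_INZ, Z2Nat.id, opp_IZR by lia; rewrite Hnu; ring).
    rewrite Ropp_involutive; symmetry; apply F_opp_nat.
Qed.

Lemma K_limit_quotient (mu : R) : sin (mu * PI) <> 0 -> K_limit F mu = K_quotient F mu.
Proof.
  intros Hs; unfold K_limit.
  rewrite (is_lim_unique _ mu (K_quotient F mu)); [reflexivity |].
  apply (is_lim_continuity (K_quotient F) mu), continuity_pt_filterlim.
  apply (ex_derive_continuous (K_quotient F)).
  assert (H1 := F_derive (- mu)); assert (H2 := F_derive mu).
  unfold K_quotient; auto_derive; repeat split; auto.
Qed.

Lemma K_limit_int (nu : R) : sin (nu * PI) = 0 ->
  K_limit F nu = PI / 2 * (- Derive F (- nu) - Derive F nu) / (cos (nu * PI) * PI).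
Proof.
  intros Hs; unfold K_limit.
  assert (Hc : cos (nu * PI) * PI <> 0).
  { apply Rmult_integral_contrapositive; split; [| apply PI_neq0].
    intros E; assert (S := sin2_cos2 (nu * PI)); unfold Rsqr in S; rewrite Hs, E in S; lra. }
  rewrite (is_lim_unique _ nu (PI / 2 * (- Derive F (- nu) - Derive F nu) / (cos (nu * PI) * PI)));
    [reflexivity |].
  assert (H1 := F_derive (- nu)); assert (H2 := F_derive nu).
  apply (is_lim_lhopital (fun m => F (- m) - F m) (fun m => sin (m * PI))); auto.
  - auto_derive; auto; change (fun y => F y) with F; ring.
  - auto_derive; auto; ring.
  - rewrite F_opp_int by auto; ring.
Qed.

Lemma Derive_K_limit (mu : R) : sin (mu * PI) <> 0 ->
  Derive (K_limit F) mu = Derive (K_quotient F) mu.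
Proof.
  intros Hs; apply Derive_ext_loc.
  assert (Hcont : continuous (fun y => sin (y * PI)) mu).
  { apply (ex_derive_continuous (fun y => sin (y * PI))); auto_derive; auto. }
  destruct (Hcont _ (locally_ball (sin (mu * PI)) (mkposreal _ (Rabs_pos_lt _ Hs)))) as [eps Heps].
  exists eps; intros y Hy; apply K_limit_quotient.
  specialize (Heps y Hy).
  change (Rabs (sin (y * PI) - sin (mu * PI)) < Rabs (sin (mu * PI))) in Heps.
  intros E; rewrite E, Rminus_0_l, Rabs_Ropp in Heps; lra.
Qed.

(* At integer orders [K_limit] comes from L'Hopital's rule, and the identities still hold. *)
Lemma K_limit_identities (nu : R) :
  sin (PI * nu) * K_limit F nu = PI / 2 * (F (- nu) - F nu) /\
  2 * cos (PI * nu) * K_limit F nu + 2 / PI * sin (PI * nu) * Derive (K_limit F) nu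
    = - (Derive F (- nu) + Derive F nu).
Proof.
  assert (HPI := PI_neq0); rewrite (Rmult_comm PI nu).
  destruct (Req_dec (sin (nu * PI)) 0) as [Hs | Hs].
  - assert (Hc : cos (nu * PI) <> 0).
    { intros E; assert (S := sin2_cos2 (nu * PI)); unfold Rsqr in S; rewrite Hs, E in S; lra. }
    rewrite K_limit_int, F_opp_int, Hs by auto; split; field; auto.
  - rewrite K_limit_quotient, Derive_K_limit by auto.
    assert (H1 := F_derive (- nu)); assert (H2 := F_derive nu).
    rewrite (is_derive_unique (K_quotient F) nu
      (PI / 2 * (- (cos (nu * PI) * PI) / (sin (nu * PI) * sin (nu * PI))) * (F (- nu) - F nu)
       + PI / 2 / sin (nu * PI) * (- Derive F (- nu) - Derive F nu))).
    + unfold K_quotient; split; field; auto.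
    + unfold K_quotient; auto_derive; [repeat split; auto |].
      change (fun y => F y) with F; field; auto.
Qed.

End KLimit.

Lemma BesselK_w1 (x mu : R) : 0 < x ->
  BesselK mu (w1 x) = (K_limit (Ire x) mu, K_limit (Iim x) mu).
Proof.
  intros Hx; unfold BesselK, K_limit; f_equal; f_equal; apply Lim_ext; intros m;
    unfold BesselK_raw; rewrite !BesselI_w1 by auto; unfold K_quotient; simpl; ring.
Qed.

Lemma dorder_BesselK_w1 (x nu : R) : 0 < x ->
  dorder BesselK nu (w1 x) = (Derive (K_limit (Ire x)) nu, Derive (K_limit (Iim x)) nu).
Proof. intros Hx; unfold dorder; f_equal; apply Derive_ext; intros m; rewrite BesselK_w1; auto. Qed.

Lemma kelvin_rhs_expand (nu x : R) :
  let K := BesselK nu (w1 x) in let dK := dorder BesselK nu (w1 x) in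
  let dJ := dorder BesselJ nu (w2 x) in
  let C := cos (PI * nu) in let S := sin (PI * nu) in
  let P := 2 * C * Re K + 2 / PI * S * Re dK + S * Im K in
  let Q := 2 * C * Im K + 2 / PI * S * Im dK - S * Re K in
  kelvin_rhs nu x =
  (cos (PI * nu / 2) * P + sin (PI * nu / 2) * Q + Re dJ,
   cos (PI * nu / 2) * Q - sin (PI * nu / 2) * P + Im dJ).
Proof.
  intros K dK dJ C S P Q; unfold kelvin_rhs; fold (w1 x) (w2 x) K dK dJ.
  unfold P, Q, C, S; clearbody K dK dJ.
  destruct K as [k1 k2], dK as [e1 e2], dJ as [j1 j2].
  rewrite !eI_eq, !cos_neg, !sin_neg; unfold Cmult, Cplus, RtoC, Re, Im; simpl.
  f_equal; field; apply PI_neq0.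
Qed.

Lemma kelvin_rhs_eq (x nu : R) : 0 < x ->
  kelvin_rhs nu x = (- ber_deriv x (- nu), - bei_deriv x (- nu)).
Proof.
  intros Hx; rewrite kelvin_rhs_expand; cbv zeta.
  rewrite BesselK_w1, dorder_BesselK_w1, dorder_BesselJ_w2 by auto; unfold Re, Im; cbn [fst snd].
  destruct (K_limit_identities (Ire x) (ex_derive_Ire x) (Ire_opp_nat x) nu) as [HA1 HA2].
  destruct (K_limit_identities (Iim x) (ex_derive_Iim x) (Iim_opp_nat x) nu) as [HB1 HB2].
  rewrite HA1, HA2, HB1, HB2.
  unfold ber_deriv, bei_deriv.
  replace (PI * - nu / 2) with (- (PI * nu / 2)) by field; rewrite cos_neg, sin_neg.
  f_equal; unfold Rdiv; ring.
Qed.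

Theorem mainTheorem2 : forall x nu : R, 0 < x -> 0 < nu ->
  is_derive (fun mu => ber mu x) (- nu) (- Re (kelvin_rhs nu x)) /\
  is_derive (fun mu => bei mu x) (- nu) (- Im (kelvin_rhs nu x)).
Proof.
  intros x nu Hx _; rewrite kelvin_rhs_eq by auto; unfold Re, Im; cbn [fst snd].
  rewrite !Ropp_involutive; split; [apply is_derive_ber | apply is_derive_bei]; auto.
Qed.
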